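(* Let $T$ be a Borel automorphism of a separable metric space $(X,\rho)$ and let $\mathfrak{s}=\{h_1,\dots,h_n\}$ be a nontrivial primitive signature. Then for every $\varepsilon>0$ there exist Borel subsets $B_1,\dots,B_n\subset X$ such that: (1) the towers $\mathcal{R}_{h_i}[B_i]$, $i=1,\dots,n$, are full and pairwise disjoint; (2) $T$ maps the set $\bigcup_{i=1}^n\bar{\mathcal{R}}_{h_i}[B_i]$ bijectively onto itself; (3) for every $\mu\in M_{\mathrm{ap}}(X,T)$, $$\sum_{i=1}^n\mu\big(\bar{\mathcal{R}}_{h_i}[B_i]\big)=1,\qquad \sum_{i=1}^n\mu(B_i)<\tfrac12+\varepsilon.$$
   Context: A Borel automorphism is an invertible map with $T$ and $T^{-1}$ Borel measurable. $M_{\mathrm{ap}}(X,T)$ is the set of $T$-invariant Borel probability measures on $X$ giving measure zero to the set of $T$-periodic points. A signature is a finite nonempty set $\mathfrak{s}\subset\mathbb{N}$ of positive integers; it is primitive if its elements are jointly coprime, and trivial if $\mathfrak{s}=\{1\}$. For a Borel set $B\subset X$, the Rokhlin tower with base $B$ is the sequence of sets $B_0=B$, $B_k=TB_{k-1}\setminus B_0$ ($k\ge1$); for $h\in\mathbb{N}$ the tower $\mathcal{R}_h[B]$ of height $h$ consists of the levels $B_0,\dots,B_{h-1}$, and $\bar{\mathcal{R}}_h[B]=\bigcup_{k=0}^{h-1}B_k$. The tower $\mathcal{R}_h[B]$ is full if $B_k=T^kB$ for $k=0,\dots,h-1$ (and the levels are pairwise disjoint). Two towers are disjoint if their unions $\bar{\mathcal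 R}$ are disjoint. *)

From HB Require Import structures.
From mathcomp Require Import all_boot all_order all_algebra.
From mathcomp Require Import all_classical all_reals all_analysis.
Set Implicit Arguments. Unset Strict Implicit. Unset Printing Implicit Defensive.
Import Order.TTheory GRing.Theory Num.Theory.
Local Open Scope classical_set_scope.
Local Open Scope ring_scope.

Section Defs.
Context {R : realType} {X : Type}.

Definition is_metric (rho : X -> X -> R) : Prop :=
  [/\ forall x y, 0 <= rho x y,
      forall x y, rho x y = 0 <-> x = y,
      forall x y, rho x y = rho y x &
      forall x y z, rho x z <= rho x y + rho y z].

Definition rho_open (rho : X -> X -> R) (A : set X) : Prop :=
  forall x, A x -> exists2 r : R, 0 < r & [set y | rho x y < r] `<=` A.

Definition rho_separable (rho : X -> X -> R) : Prop :=
  exists D : set X, countable D /\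
    forall x (e : R), 0 < e -> exists2 y, D y & rho x y < e.

End Defs.

Section Towers.
Context {X : Type}.

Fixpoint tower_level (T : X -> X) (B : set X) (k : nat) : set X :=
  match k with
  | 0 => B
  | k'.+1 => (T @` tower_level T B k') `\` B
  end.

Definition tower_union (T : X -> X) (B : set X) (h : nat) : set X :=
  \bigcup_(k in [set k : nat | (k < h)%N]) tower_level T B k.

Definition tower_full (T : X -> X) (B : set X) (h : nat) : Prop :=
  (forall k, (k < h)%N -> tower_level T B k = (iter k T) @` B) /\
  (forall k l, (k < h)%N -> (l < h)%N -> k <> l ->
     tower_level T B k `&` tower_level T B l = set0).

Definition periodic_points (T : X -> X) : set X :=
  [set x | exists2 n : nat, (0 < n)%N & iter n T x = x].

End Towers.

Definition borel_automorphism d (X : measurableType d) (T : X -> X) : Prop :=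
  exists Tinv : X -> X, [/\ cancel T Tinv, cancel Tinv T,
     measurable_fun setT T & measurable_fun setT Tinv].

Definition M_ap d (X : measurableType d) (R : realType) (T : X -> X)
  (mu : probability X R) : Prop :=
  (forall A, measurable A -> mu (T @^-1` A) = mu A) /\
  mu (periodic_points T) = 0%E.

From HB Require Import structures.
From mathcomp Require Import all_boot all_order all_algebra.
From mathcomp Require Import all_classical all_reals all_analysis.
From mathcomp Require Import zify lra.
Import Order.TTheory GRing.Theory Num.Theory.
Local Open Scope classical_set_scope.
Local Open Scope ring_scope.
Set Implicit Arguments. Unset Strict Implicit. Unset Printing Implicit Defensive.

(* Choose N and a Borel marker set S which meets the orbit of every point without
   period < N, consecutive visits being at least N steps apart (S is built greedily
   from a countable base of balls).  Since the heights are coprime, every length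
   m >= K is a sum of heights in which all tiles of height 1 come within the first
   K positions.  Tiling each stretch of orbit between consecutive markers in this
   way gives full disjoint towers exhausting the points without period < N, which
   carry every measure of M_ap.  The bases of the towers of height >= 2 are disjoint
   from their image under T, so 2 mu(tall bases) + mu(short bases) <= 1, while the
   short bases lie within K steps after a marker and N mu(S) <= 1; hence the bases
   have total measure at most 1/2 + K/N. *)

Section Tilings.
Local Open Scope nat_scope.
Variables (n : nat) (h : 'I_n -> nat).

Definition tiling_length (L : seq 'I_n) := sumn (map h L).

(* [tile_at L o = Some (i, k)]: position [o] lies at height [k] of a tile of type [i]
   when the tiles of [L] are laid end to end from position 0. *)
Fixpoint tile_at (L : seq 'I_n) (o : nat) : option ('I_n * nat) :=
  match L with
  | [::] => None
  | i :: L' => if o < h i then Some (i, o) else tile_at L' (o - h i)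
  end.

Lemma tiling_length_cat L1 L2 :
  tiling_length (L1 ++ L2) = tiling_length L1 + tiling_length L2.
Proof. by rewrite /tiling_length map_cat sumn_cat. Qed.

Lemma tiling_length_nseq q i : tiling_length (nseq q i) = h i * q.
Proof. by rewrite /tiling_length map_nseq sumn_nseq. Qed.

Lemma tile_at_defined L o : o < tiling_length L -> exists p, tile_at L o = Some p.
Proof.
elim: L o => [|i L IH] o //=; rewrite /tiling_length /=.
case: ifP => [_|/negbT]; first by eauto.
by rewrite -leqNgt => hle ho; apply: IH; rewrite /tiling_length; lia.
Qed.

Lemma tile_atP L o i k : tile_at L o = Some (i, k) ->
  [/\ k < h i, k <= o & o - k + h i <= tiling_length L].
Proof.
elim: L o => [|j L IH] o //=; rewrite /tiling_length /=.
case: ifP => [ho [<- <-]|/negbT]; first by split => //; lia.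
by rewrite -leqNgt => hle /IH [h1 h2]; rewrite /tiling_length; split => //; lia.
Qed.

Lemma tile_atS L o i k : tile_at L o = Some (i, k) -> k.+1 < h i ->
  tile_at L o.+1 = Some (i, k.+1).
Proof.
elim: L o => [|j L IH] o //=.
case: ifP => [ho [<- <-] ->|/negbT] //; rewrite -leqNgt => hle /IH H /H.
have -> : (o.+1 < h j) = false by apply/negbTE; rewrite -leqNgt; lia.
by have -> : o.+1 - h j = (o - h j).+1 by lia.
Qed.

Lemma tile_atB L o i k j : tile_at L o = Some (i, k) -> j <= k ->
  tile_at L (o - j) = Some (i, k - j).
Proof.
elim: L o => [|c L IH] o //=.
case: ifP => [ho [<- <-] hk|/negbT]; first by have -> : o - j < h c by lia.
rewrite -leqNgt => hle Hl hjk; have [_ hko _] := tile_atP Hl.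
have -> : (o - j < h c) = false by apply/negbTE; rewrite -leqNgt; lia.
have -> : o - j - h c = o - h c - j by lia.
exact: IH.
Qed.

Lemma tile_at_cat L1 L2 o : tiling_length L1 <= o ->
  tile_at (L1 ++ L2) o = tile_at L2 (o - tiling_length L1).
Proof.
elim: L1 o => [|c L IH] o /=; rewrite /tiling_length /=; first by rewrite subn0.
move=> hle; have -> : (o < h c) = false by apply/negbTE; rewrite -leqNgt; lia.
by rewrite IH /tiling_length; [congr tile_at; lia | lia].
Qed.

Lemma tile_at_nseq q i0 o i k : tile_at (nseq q i0) o = Some (i, k) -> i = i0.
Proof. by elim: q o => [|q IH] o //=; case: ifP => [_ [<-]|_] //; exact: IH. Qed.

Hypothesis h_gt0 : forall i, 0 < h i.

(* Bezout, one height at a time. *)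
Lemma tiling_length_gcd_mod i0 x :
  exists L, tiling_length L = x * \big[gcdn/0]_(i < n) h i %[mod h i0].
Proof.
elim/big_rec: _ x => [|i g _ IH] x; first by exists [::]; rewrite muln0.
have [a _ /dvdnP [u Hu]] := Bezoutl g (h_gt0 i).
have [L HL] := IH (x * a * (h i0).-1).
exists (nseq (x * u) i ++ L).
rewrite tiling_length_cat tiling_length_nseq -modnDmr HL modnDmr.
have -> : h i * (x * u) + x * a * (h i0).-1 * g = x * gcdn (h i) g + (x * a * g) * h i0.
  have : x * (u * h i) = x * (gcdn (h i) g + a * g) by rewrite Hu.
  have E : h i0 = (h i0).-1.+1 by have := h_gt0 i0; lia.
  by rewrite {2}E; nia.
by rewrite addnC modnMDl.
Qed.

(* Tile the residue of [m] modulo [h i0] by a tiling of bounded length, then pad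
   with copies of the tile [i0]: tiles of height 1 then only start before [K]. *)
Lemma eventual_tilings (i0 : 'I_n) : \big[gcdn/0]_(i < n) h i = 1 -> 1 < h i0 ->
  exists (K : nat) (L : nat -> seq 'I_n),
    (forall m, K <= m -> tiling_length (L m) = m) /\
    (forall m o i, tile_at (L m) o = Some (i, 0) -> h i < 2 -> o < K).
Proof.
move=> gcd1 hi0.
have H r : exists L, tiling_length L = r %[mod h i0].
  by have [L HL] := tiling_length_gcd_mod i0 r; exists L; rewrite HL gcd1 muln1.
pose Lr r := projT1 (cid (H r)).
have HLr r : tiling_length (Lr r) = r %[mod h i0] := projT2 (cid (H r)).
have hp : 0 < h i0 by lia.
pose M := \max_(r < h i0) tiling_length (Lr r).
have HM m : tiling_length (Lr (m %% h i0)) <= M.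
  exact: (@leq_bigmax _ (fun r : 'I_(h i0) => tiling_length (Lr r)) (Ordinal (ltn_pmod m hp))).
exists M.+1, (fun m => Lr (m %% h i0) ++
  nseq ((m - tiling_length (Lr (m %% h i0))) %/ h i0) i0); split.
  move=> m hm; rewrite tiling_length_cat tiling_length_nseq.
  set y := tiling_length _; have hy : y <= m by have := HM m; lia.
  have /divnK : h i0 %| m - y by rewrite -eqn_mod_dvd // /y HLr modn_mod.
  by rewrite mulnC => ->; lia.
move=> m o i; set y := tiling_length _ => Hl hi.
case: (ltnP o y) => hoy; first by have := HM m; lia.
by rewrite tile_at_cat // in Hl; rewrite (tile_at_nseq Hl) in hi; lia.
Qed.

End Tilings.

Lemma exists_least (P : nat -> Prop) :
  (exists n, P n) -> exists n, P n /\ forall m, (m < n)%N -> ~ P m.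
Proof.
move=> [k Pk]; have ex : exists k, `[< P k >] by exists k; apply/asboolP.
case: (ex_minnP ex) => m /asboolP Pm minm; exists m; split => // j jm /asboolP/minm.
by rewrite leqNgt jm.
Qed.

Section Orbits.
Local Open Scope nat_scope.
Variables (X : Type) (T Ti : X -> X).
Hypotheses (TK : cancel T Ti) (TiK : cancel Ti T).

Lemma iterTK k : cancel (iter k T) (iter k Ti).
Proof. by elim: k => [|k IH] x //; rewrite (iterSr k Ti) /= TK IH. Qed.

Lemma iterTiK k : cancel (iter k Ti) (iter k T).
Proof. by elim: k => [|k IH] x //; rewrite (iterSr k T) /= TiK IH. Qed.

Lemma iterT_iterTi a c x : a <= c -> iter a T (iter c Ti x) = iter (c - a) Ti x.
Proof. by move=> ac; rewrite -{1}(subnKC ac) iterD iterTiK. Qed.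

Lemma iterTi_iterT a c x : a <= c -> iter a Ti (iter c T x) = iter (c - a) T x.
Proof. by move=> ac; rewrite -{1}(subnKC ac) iterD iterTK. Qed.

Lemma image_iterT k (A : set X) : iter k T @` A = iter k Ti @^-1` A.
Proof.
apply/seteqP; split => [_ [x Ax <-]|y Ay]; first by rewrite /= iterTK.
by exists (iter k Ti y); rewrite ?iterTiK.
Qed.

Variable N : nat.

Definition aperiodic_below := [set x | forall j, 0 < j < N -> iter j T x <> x].

Lemma aperiodic_belowT x : aperiodic_below (T x) <-> aperiodic_below x.
Proof.
split => Hx j hj E; first by apply: (Hx j hj); rewrite -iterSr iterS E.
by apply: (Hx j hj); apply: (can_inj TK); rewrite -iterS iterSr.
Qed.

Lemma aperiodic_below_iterT k x : aperiodic_below x -> aperiodic_below (iter k T x).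
Proof. by elim: k => [|k IH] //= /IH /aperiodic_belowT. Qed.

Lemma aperiodic_below_iterTi k x : aperiodic_below x -> aperiodic_below (iter k Ti x).
Proof. by elim: k => [|k IH] //= /IH Hx; apply/aperiodic_belowT; rewrite TiK. Qed.

Lemma image_aperiodic_below : T @` aperiodic_below = aperiodic_below.
Proof.
apply/seteqP; split; first by move=> _ [x Hx <-]; apply/aperiodic_belowT.
by move=> y Hy; exists (Ti y); [apply/aperiodic_belowT; rewrite TiK | rewrite TiK].
Qed.

Lemma complement_aperiodic_below : ~` aperiodic_below `<=` periodic_points T.
Proof.
move=> x /existsNP [j /not_implyP [/andP [j_gt0 _] /contrapT E]].
by exists j.
Qed.

Variable S : set X.
Hypothesis marker_gap : forall x j, S x -> 0 < j < N -> ~ S (iter j T x).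

Lemma markers_iterTi_disjoint j l x :
  j < l < N -> S (iter j Ti x) -> S (iter l Ti x) -> False.
Proof.
move=> hjl Sj Sl; have := marker_gap Sl (j := l - j).
by rewrite iterT_iterTi ?subKn; [move/(_ _ Sj); lia | lia | lia].
Qed.

(* The last marker of the orbit of [x] is [b] steps back, the next one [f] steps ahead. *)
Definition between_markers b f x :=
  [/\ S (iter b Ti x), (forall c, c < b -> ~ S (iter c Ti x)), 0 < f,
      S (iter f T x) & (forall c, 0 < c < f -> ~ S (iter c T x))].

Lemma between_markers_uniq b f b' f' x :
  between_markers b f x -> between_markers b' f' x -> b = b' /\ f = f'.
Proof.
move=> [h1 h2 h3 h4 h5] [g1 g2 g3 g4 g5]; split.
  by case: (ltngtP b b') => // hb; [case: (g2 _ hb) | case: (h2 _ hb)].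
by case: (ltngtP f f') => // hf; [case: (g5 f) | case: (h5 f')] => //; lia.
Qed.

Lemma between_markersT b f x :
  between_markers b f x -> 1 < f -> between_markers b.+1 f.-1 (T x).
Proof.
move=> [h1 h2 h3 h4 h5] hf; split; first by rewrite iterSr TK.
- by case=> [|c] hc; [apply: (h5 1); lia | rewrite iterSr TK; exact: h2].
- lia.
- by rewrite -iterSr prednK //; lia.
- by move=> c hc; rewrite -iterSr; apply: h5; lia.
Qed.

Lemma between_markersTi b f x :
  between_markers b f x -> 0 < b -> between_markers b.-1 f.+1 (Ti x).
Proof.
move=> [h1 h2 h3 h4 h5] hb; split; first by rewrite -iterSr prednK.
- by move=> c hc; rewrite -iterSr; apply: h2; lia.
- lia.
- by rewrite iterSr TiK.
- case=> [|[|c]] hc //; first by rewrite /= TiK; apply: (h2 0).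
  by rewrite iterSr TiK; apply: h5; lia.
Qed.

Lemma between_markers_gap b f x : between_markers b f x -> N <= b + f.
Proof.
move=> [h1 _ f_gt0 h4 _]; case: (leqP N (b + f)) => // hlt.
by have := marker_gap h1 (j := f + b); rewrite iterD iterTiK; move/(_ _ h4); lia.
Qed.

Hypothesis markers_aperiodic : S `<=` aperiodic_below.
Hypothesis markers_cover : forall x, aperiodic_below x ->
  exists j, j < N /\ (S (iter j T x) \/ S (iter j Ti x)).

Lemma between_markers_aperiodic b f x : between_markers b f x -> aperiodic_below x.
Proof.
by move=> [/markers_aperiodic /(aperiodic_below_iterT (k := b))]; rewrite iterTiK.
Qed.

Lemma aperiodic_between_markers x : aperiodic_below x -> exists b f, between_markers b f x.
Proof.
move=> Gx.
have [f [[f_gt0 Sf] fmin]] : exists f, (0 < f /\ S (iter f T x)) /\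
    forall m, m < f -> ~ (0 < m /\ S (iter m T x)).
  apply: exists_least.
  have [j [hj [H|H]]] := markers_cover (aperiodic_below_iterT (k := N) Gx).
    by exists (j + N); split; [lia | rewrite iterD].
  by exists (N - j); split; [lia | rewrite -iterTi_iterT //; lia].
have [b [Sb bmin]] : exists b, S (iter b Ti x) /\ forall m, m < b -> ~ S (iter m Ti x).
  apply: exists_least.
  have [j [hj [H|H]]] := markers_cover (aperiodic_below_iterTi (k := N) Gx).
    by exists (N - j); rewrite -iterT_iterTi //; lia.
  by exists (j + N); rewrite iterD.
by exists b, f; split => // c hc Sc; apply: (fmin c); [lia | split => //; lia].
Qed.

Variables (n : nat) (h : 'I_n -> nat) (L : nat -> seq 'I_n).
Hypothesis tiling_lengthL : forall m, N <= m -> tiling_length h (L m) = m.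

(* The stretch of orbit between two consecutive markers is tiled by [L (b + f)];
   [x] lies at height [k] of a tile of type [i]. *)
Definition tile_level i k :=
  [set x | exists b f, between_markers b f x /\ tile_at h (L (b + f)) b = Some (i, k)].

Lemma tile_level_uniq i k j l x : tile_level i k x -> tile_level j l x -> i = j /\ k = l.
Proof.
move=> [b [f [C1 E1]]] [b' [f' [C2 E2]]].
have [? ?] := between_markers_uniq C1 C2; subst b' f'.
by move: E2; rewrite E1 => -[].
Qed.

Lemma tile_levelT i k x : tile_level i k x -> k.+1 < h i -> tile_level i k.+1 (T x).
Proof.
move=> [b [f [C E]]] hk; have [_ _] := tile_atP E.
rewrite tiling_lengthL ?(between_markers_gap C) // => hbf.
exists b.+1, f.-1; split; first by apply: between_markersT => //; lia.
have -> : b.+1 + f.-1 = b + f by lia.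
exact: tile_atS.
Qed.

Lemma tile_levelTi i k x : tile_level i k.+1 x -> tile_level i k (Ti x).
Proof.
move=> [b [f [C E]]]; have [_ hb _] := tile_atP E.
exists b.-1, f.+1; split; first by apply: between_markersTi => //; lia.
have -> : b.-1 + f.+1 = b + f by lia.
by have := tile_atB E (ltn0Sn k); rewrite !subn1.
Qed.

Lemma image_tile_level i k : k.+1 < h i -> T @` tile_level i k = tile_level i k.+1.
Proof.
move=> hk; apply/seteqP; split; first by move=> _ [x Hx <-]; exact: tile_levelT.
by move=> y Hy; exists (Ti y); [exact: tile_levelTi | rewrite TiK].
Qed.

Lemma image_iter_tile_level i k : k < h i -> iter k T @` tile_level i 0 = tile_level i k.
Proof.
elim: k => [|k IH] hk; first by rewrite image_id.
rewrite -image_tile_level // -IH; last lia.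
by rewrite -image_comp.
Qed.

Lemma tower_level_tile i k : k < h i -> tower_level T (tile_level i 0) k = tile_level i k.
Proof.
elim: k => [|k IH] hk //=; rewrite IH ?image_tile_level //; last lia.
apply/seteqP; split => [x [] //|x Hx]; split => // H0.
by have [_] := tile_level_uniq Hx H0.
Qed.

Lemma tower_union_tile i :
  tower_union T (tile_level i 0) (h i) = \bigcup_(k in [set k | k < h i]) tile_level i k.
Proof. by apply: eq_bigcupr => k hk; exact: tower_level_tile. Qed.

Lemma tower_full_tile i : tower_full T (tile_level i 0) (h i).
Proof.
split => [k hk|k l hk hl hkl]; first by rewrite tower_level_tile ?image_iter_tile_level.
rewrite !tower_level_tile //; apply/seteqP; split => // x [H1 H2].
by have [_] := tile_level_uniq H1 H2.
Qed.

Lemma tile_towers_disjoint i j : i <> j ->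
  tower_union T (tile_level i 0) (h i) `&` tower_union T (tile_level j 0) (h j) = set0.
Proof.
move=> ij; rewrite !tower_union_tile; apply/seteqP; split => // x [[k _ H1] [l _ H2]].
by have [] := tile_level_uniq H1 H2.
Qed.

Lemma tile_level_aperiodic i k x : tile_level i k x -> aperiodic_below x.
Proof. by move=> [b [f [C _]]]; exact: between_markers_aperiodic C. Qed.

Lemma bigcup_tile_towers :
  \bigcup_(i in setT) tower_union T (tile_level i 0) (h i) = aperiodic_below.
Proof.
apply/seteqP; split => x.
  by move=> [i _]; rewrite tower_union_tile => -[k _]; exact: tile_level_aperiodic.
move=> /aperiodic_between_markers [b [f C]].
have [[i k] E] : exists p, tile_at h (L (b + f)) b = Some p.
  by apply: tile_at_defined; rewrite tiling_lengthL ?(between_markers_gap C) //; case: C; lia.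
exists i => //; rewrite tower_union_tile; exists k; last by exists b, f.
by have [] := tile_atP E.
Qed.

Variable K : nat.
Hypothesis short_tiles_early :
  forall m o i, tile_at h (L m) o = Some (i, 0) -> h i < 2 -> o < K.

Lemma short_tile_base_near_marker i x :
  tile_level i 0 x -> h i < 2 -> exists2 b, b < K & S (iter b Ti x).
Proof. by move=> [b [f [[Sb _ _ _ _] E]]] hi; exists b => //; exact: short_tiles_early E hi. Qed.

End Orbits.

Lemma measurable_preimage d d' (X : measurableType d) (Y : measurableType d')
  (f : X -> Y) (A : set Y) : measurable_fun setT f -> measurable A -> measurable (f @^-1` A).
Proof. by move=> mf mA; rewrite -[_ @^-1` _]setTI; exact: mf. Qed.

Lemma measurable_fun_iter d (X : measurableType d) (f : X -> X) k :
  measurable_fun setT f -> measurable_fun setT (iter k f).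
Proof.
move=> mf; elim: k => [|k IH]; first exact: measurable_id.
by rewrite -[iter k.+1 f]/(f \o iter k f); exact: measurableT_comp.
Qed.

Lemma measurable_preimage_iter d (X : measurableType d) (f : X -> X) k (A : set X) :
  measurable_fun setT f -> measurable A -> measurable (iter k f @^-1` A).
Proof. by move=> mf; apply/measurable_preimage/measurable_fun_iter. Qed.

Lemma separable_dense_seq (R : realType) (X : pointedType) (rho : X -> X -> R) :
  rho_separable rho -> exists en : nat -> X,
    forall x (e : R), 0 < e -> exists a, rho x (en a) < e.
Proof.
move=> [D [/pcard_surjP [en Hen] Hdense]]; exists en => x e e0.
by have [y /Hen [a _ <-]] := Hdense x e e0; exists a.
Qed.

Lemma exists_nat_ratio_lt (R : realType) (K : nat) (eps : R) :
  0 < eps -> exists2 N, (K < N)%N & K%:R / N%:R < eps.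
Proof.
move=> eps_gt0; exists (K + (Num.truncn (K%:R / eps)).+1)%N; first lia.
rewrite ltr_pdivrMr ?ltr0n ?addnS // mulrC -ltr_pdivrMr //.
by apply: (lt_le_trans (truncnS_gt _)); rewrite ler_nat ltnS leq_addl.
Qed.

Lemma finite_pos_lower_bound (R : realType) (F : nat -> R) M :
  (forall j, (0 < j < M)%N -> 0 < F j) ->
  exists2 e, 0 < e & forall j, (0 < j < M)%N -> e <= F j.
Proof.
elim: M => [|M IH] HF; first by exists 1 => // j; lia.
have [e e0 He] : exists2 e, 0 < e & forall j, (0 < j < M)%N -> e <= F j.
  by apply: IH => j hj; apply: HF; lia.
case: (posnP M) => [->|M_gt0]; first by exists 1 => // j; lia.
have FM : 0 < F M by apply: HF; lia.
exists (Num.min e (F M)); first by rewrite lt_min e0 FM.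
move=> j hj; case: (ltnP j M) => hjM; first by rewrite ge_min He //; lia.
have -> : j = M by lia.
by rewrite ge_min lexx orbT.
Qed.

Section SeparableMetric.
Variables (R : realType) (d : measure_display) (X : measurableType d) (rho : X -> X -> R).
Hypothesis rho_metric : is_metric rho.
Hypothesis borel : @measurable d X = <<s rho_open rho >>.
Variable en : nat -> X.
Hypothesis en_dense : forall x (e : R), 0 < e -> exists a, rho x (en a) < e.

Let rho_ge0 x y : 0 <= rho x y. Proof. by case: rho_metric. Qed.
Let rho_eq0 x y : rho x y = 0 <-> x = y. Proof. by case: rho_metric. Qed.
Let rho_sym x y : rho x y = rho y x. Proof. by case: rho_metric. Qed.
Let rho_tri x y z : rho x z <= rho x y + rho y z. Proof. by case: rho_metric. Qed.

Definition radius (k : nat) : R := k.+1%:R^-1.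

Lemma radius_gt0 k : 0 < radius k.
Proof. by rewrite invr_gt0 ltr0n. Qed.

Lemma radius_lt e : 0 < e -> exists k, radius k < e.
Proof.
move=> e0; exists (Num.truncn e^-1).
rewrite /radius -[X in _ < X]invrK ltf_pV2 ?posrE ?invr_gt0 ?ltr0n //.
exact: truncnS_gt.
Qed.

Definition base_ball a k := [set z | rho (en a) z < radius k].

Lemma base_ball_small x e : 0 < e ->
  exists a k, base_ball a k x /\ forall z, base_ball a k z -> rho x z < e.
Proof.
move=> e0; have [k hk] := radius_lt (divr_gt0 e0 (ltr0n _ 2)).
have [a ha] := en_dense x (radius_gt0 k).
exists a, k; split => [|z]; first by rewrite /base_ball /= rho_sym.
by rewrite /base_ball /= => hz; have := rho_tri x (en a) z; lra.
Qed.

Lemma measurable_base_ball a k : measurable (base_ball a k).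
Proof.
rewrite borel; apply: sub_sigma_algebra => y hy.
exists (radius k - rho (en a) y); first by rewrite /base_ball /= in hy; lra.
by move=> z /= hz; rewrite /base_ball /=; have := rho_tri (en a) y z; lra.
Qed.

(* A point is not fixed iff some base ball contains it but not its image. *)
Lemma measurable_fixed_points (f : X -> X) :
  measurable_fun setT f -> measurable [set x | f x = x].
Proof.
move=> mf; have -> : [set x | f x = x] = ~` \bigcup_(a in setT) \bigcup_(k in setT)
    (base_ball a k `&` f @^-1` (~` base_ball a k)).
  apply/seteqP; split => x /=; first by move=> E [a _ [k _ [B1]]]; rewrite /= E.
  move=> H; apply/not_notP => fx.
  have hp : 0 < rho x (f x) by rewrite lt_def rho_ge0 andbT; apply/eqP => /rho_eq0/esym.
  have [a [k [Bx Hz]]] := @base_ball_small x _ hp.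
  apply: H; exists a => //; exists k => //; split => //= Bf.
  by have := Hz _ Bf; rewrite ltxx.
apply/measurableC/bigcup_measurable => a _; apply: bigcup_measurable => k _.
apply: measurableI; first exact: measurable_base_ball.
by apply: measurable_preimage => //; apply/measurableC/measurable_base_ball.
Qed.

Variables (T Ti : X -> X).
Hypothesis TK : cancel T Ti.
Hypotheses (mT : measurable_fun setT T) (mTi : measurable_fun setT Ti).

Lemma measurable_periodic_points : measurable (periodic_points T).
Proof.
have -> : periodic_points T = \bigcup_(k in [set k | (0 < k)%N]) [set x | iter k T x = x].
  by apply/seteqP; split => x [k hk E]; exists k.
by apply: bigcup_measurable => k _; apply/measurable_fixed_points/measurable_fun_iter.
Qed.

Variable N : nat.

Lemma measurable_aperiodic_below : measurable (aperiodic_below T N).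
Proof.
have -> : aperiodic_below T N =
    ~` \bigcup_(j in [set j | (0 < j < N)%N]) [set x | iter j T x = x].
  by apply/seteqP; split => x H; [move=> [j hj /H] | move=> j hj E; apply: H; exists j].
apply/measurableC/bigcup_measurable => j _.
exact/measurable_fixed_points/measurable_fun_iter.
Qed.

(* Enumerating the base balls [U] by [p], [candidate_marker p] is the set of points
   of [U] not returning to [U] before time [N]. *)
Definition candidate_marker (p : nat) : set X :=
  if unpickle p is Some (a, k) then
    base_ball a k `\` \bigcup_(j in [set j | (0 < j < N)%N]) (iter j T @^-1` base_ball a k)
  else set0.

Lemma measurable_candidate_marker p : measurable (candidate_marker p).
Proof.
rewrite /candidate_marker; case: unpickle => [[a k]|//].
apply: measurableD; first exact: measurable_base_ball.
by apply: bigcup_measurable => j _; apply/measurable_preimage_iter/measurable_base_ball.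
Qed.

Lemma candidate_marker_gap p x j :
  candidate_marker p x -> (0 < j < N)%N -> ~ candidate_marker p (iter j T x).
Proof.
by rewrite /candidate_marker; case: unpickle => [[a k]|//] [_ H] hj [B _]; apply: H; exists j.
Qed.

Lemma candidate_marker_aperiodic p : candidate_marker p `<=` aperiodic_below T N.
Proof.
rewrite /candidate_marker; case: unpickle => [[a k]|//] x [Bx H] j hj E.
by apply: H; exists j => //; rewrite /= E.
Qed.

Lemma candidate_marker_cover x : aperiodic_below T N x -> exists p, candidate_marker p x.
Proof.
move=> Gx; have [e e0 He] : exists2 e, 0 < e &
    forall j, (0 < j < N)%N -> e <= rho x (iter j T x).
  apply: finite_pos_lower_bound => j hj; rewrite lt_def rho_ge0 andbT.
  by apply/eqP => /rho_eq0 E; apply: (Gx j hj).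
have [a [k [Bx Hz]]] := @base_ball_small x _ e0.
exists (pickle (a, k)); rewrite /candidate_marker pickleK; split => // -[j hj Bj].
by have := Hz _ Bj; have := He j hj; lra.
Qed.

Definition near_orbit (Y : set X) : set X :=
  \bigcup_(j in [set j | (j < N)%N]) (iter j T @^-1` Y `|` iter j Ti @^-1` Y).

Lemma measurable_near_orbit Y : measurable Y -> measurable (near_orbit Y).
Proof.
move=> mY; apply: bigcup_measurable => j _.
by apply: measurableU; exact: measurable_preimage_iter.
Qed.

(* Greedily add the candidates, discarding the points within [N] steps of a marker
   already chosen. *)
Fixpoint greedy_markers (p : nat) : set X :=
  if p is p'.+1 then
    greedy_markers p' `|` (candidate_marker p' `\` near_orbit (greedy_markers p'))
  else set0.

Definition markers := \bigcup_p greedy_markers p.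

Lemma measurable_markers : measurable markers.
Proof.
apply: bigcupT_measurable; elim=> [|p IH] //=; apply: measurableU => //.
by apply: measurableD; [exact: measurable_candidate_marker | exact: measurable_near_orbit].
Qed.

Lemma greedy_markers_mono p q : (p <= q)%N -> greedy_markers p `<=` greedy_markers q.
Proof. by move=> /subnK <-; elim: (q - p)%N => [|m IH] //= x Hx; left; exact: IH. Qed.

Lemma greedy_markers_gap p x j :
  greedy_markers p x -> (0 < j < N)%N -> ~ greedy_markers p (iter j T x).
Proof.
elim: p x => [|p IH] x //= Hx hj Hy.
case: Hx => [Hx|[Ax NAx]]; case: Hy => [Hy|[Ay NAy]].
- exact: IH Hx hj Hy.
- by apply: NAy; exists j; [case/andP: hj | right; rewrite /= (iterTK TK)].
- by apply: NAx; exists j; [case/andP: hj | left].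
- exact: candidate_marker_gap Ax hj Ay.
Qed.

Lemma markers_gap x j : markers x -> (0 < j < N)%N -> ~ markers (iter j T x).
Proof.
move=> [p _ Hp] hj [q _ Hq]; apply: (@greedy_markers_gap (maxn p q) x j) => //.
  exact: (greedy_markers_mono (leq_maxl p q)).
exact: (greedy_markers_mono (leq_maxr p q)).
Qed.

Lemma markers_aperiodic : markers `<=` aperiodic_below T N.
Proof.
move=> x [p _]; elim: p x => [|p IH] x //= [/IH //|[]].
by move=> /candidate_marker_aperiodic.
Qed.

Lemma markers_cover x : (0 < N)%N -> aperiodic_below T N x ->
  exists j, (j < N)%N /\ (markers (iter j T x) \/ markers (iter j Ti x)).
Proof.
move=> N_gt0 /candidate_marker_cover [p Ap].
case: (pselect (near_orbit (greedy_markers p) x)) => [[j hj [H|H]]|Hn].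
- by exists j; split => //; left; exists p.
- by exists j; split => //; right; exists p.
- by exists 0%N; split => //; left; exists p.+1 => //=; right.
Qed.

End SeparableMetric.

Lemma mem_bigsetU_ord (Y : Type) n (P : pred 'I_n) (F : 'I_n -> set Y) x :
  (\big[setU/set0]_(i < n | P i) F i) x <-> exists2 i, P i & F i x.
Proof.
rewrite -bigcup_seq_cond.
split => [[i /= /andP [_ Pi] Fi]|[i Pi Fi]]; first by exists i.
by exists i; rewrite //= mem_index_enum.
Qed.

Section MeasurableTowers.
Variables (d : measure_display) (X : measurableType d) (T Ti : X -> X).
Hypotheses (mT : measurable_fun setT T) (mTi : measurable_fun setT Ti).
Variable S : set X.
Hypothesis mS : measurable S.

Lemma measurable_between_markers b f : measurable [set x | between_markers T Ti S b f x].
Proof.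
case: (posnP f) => [->|f_gt0].
  by rewrite [X in measurable X](_ : _ = set0) //; apply/seteqP; split => // x [].
rewrite [X in measurable X](_ : _ =
    iter b Ti @^-1` S `&` ~` (\bigcup_(c in [set c | (c < b)%N]) iter c Ti @^-1` S)
    `&` (iter f T @^-1` S `&` ~` (\bigcup_(c in [set c | (0 < c < f)%N]) iter c T @^-1` S))).
  apply/measurableI; apply/measurableI; try apply/measurableC/bigcup_measurable => c _;
    exact: measurable_preimage_iter.
apply/seteqP; split => x.
  move=> [h1 h2 _ h4 h5]; split; split => //; move=> [c hc Sc].
    exact: h2 hc Sc.
  exact: h5 hc Sc.
move=> [[h1 h2] [h4 h5]]; split => // [c hc Sc|c hc Sc]; first by apply: h2; exists c.
by apply: h5; exists c.
Qed.

Lemma measurable_tile_level n (h : 'I_n -> nat) L i k :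
  measurable (tile_level T Ti S h L i k).
Proof.
rewrite [X in measurable X](_ : _ = \bigcup_b \bigcup_(f in
    [set f | tile_at h (L (b + f)%N) b = Some (i, k)]) [set x | between_markers T Ti S b f x]).
  by apply: bigcupT_measurable => b; apply: bigcup_measurable => f _;
    exact: measurable_between_markers.
apply/seteqP; split => x; first by move=> [b [f [C E]]]; exists b => //; exists f.
by move=> [b _ [f E C]]; exists b, f.
Qed.


End MeasurableTowers.

Lemma probability_conull (R : realType) d (X : measurableType d) (mu : probability X R)
  (A Z : set X) : measurable A -> measurable Z -> ~` A `<=` Z -> mu Z = 0%E -> mu A = 1%E.
Proof.
move=> mA mZ AZ muZ.
have : mu (~` A) = 0%E by apply: (subset_measure0 (B := Z)) => //; exact: measurableC.
rewrite probability_setC // => /eqP; rewrite -(fineK (fin_num_measure mu _ mA)) -EFinB eqe.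
by rewrite subr_eq0 => /eqP <-.
Qed.

Section InvariantMeasure.
Variables (R : realType) (d : measure_display) (X : measurableType d) (T Ti : X -> X).
Hypotheses (TK : cancel T Ti) (TiK : cancel Ti T).
Hypotheses (mT : measurable_fun setT T) (mTi : measurable_fun setT Ti).
Variable mu : probability X R.
Hypothesis mu_invariant : forall A, measurable A -> mu (T @^-1` A) = mu A.

Lemma measure_preimage_iterTi k A : measurable A -> mu (iter k Ti @^-1` A) = mu A.
Proof.
elim: k A => [|k IH] A mA //; rewrite -[iter k.+1 Ti @^-1` A]/(iter k Ti @^-1` (Ti @^-1` A)).
have mTiA : measurable (Ti @^-1` A) by exact: measurable_preimage.
rewrite IH // -(mu_invariant mTiA); congr (mu _).
by apply/seteqP; split => x /=; rewrite TK.
Qed.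

Lemma measure_image_T A : measurable A -> mu (T @` A) = mu A.
Proof. by move=> mA; rewrite -[T]/(iter 1 T) (image_iterT TK TiK) measure_preimage_iterTi. Qed.

Variables (N : nat) (S : set X).
Hypothesis mS : measurable S.
Hypothesis marker_gap : forall x j, S x -> (0 < j < N)%N -> ~ S (iter j T x).

(* The sets [Ti^-j S], [j < N], are disjoint and all have measure [mu S]. *)
Lemma measure_markers_le : N%:R * fine (mu S) <= 1.
Proof.
pose F j := iter j Ti @^-1` S.
have mF k : measurable (F k) by exact: measurable_preimage_iter.
have tF : trivIset `I_N F.
  move=> j l /= hj hl [x [Fj Fl]]; case: (ltngtP j l) => // hjl; exfalso.
    by apply: (markers_iterTi_disjoint TiK marker_gap (j := j) (l := l) (x := x)); rewrite ?hjl.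
  by apply: (markers_iterTi_disjoint TiK marker_gap (j := l) (l := j) (x := x)); rewrite ?hjl.
have mU : measurable (\big[setU/set0]_(k < N) F k) by apply: bigsetU_measurable.
have := probability_le1 mu mU.
rewrite measure_semi_additive_ord_I // (eq_bigr (fun=> mu S)) => [|k _]; last first.
  exact: measure_preimage_iterTi.
rewrite -(fineK (fin_num_measure mu _ mS)) sumEFin lee_fin sumr_const card_ord.
by rewrite mulr_natl.
Qed.

Hypothesis markers_aperiodic : S `<=` aperiodic_below T N.
Hypothesis markers_cover : forall x, aperiodic_below T N x ->
  exists j, (j < N)%N /\ (S (iter j T x) \/ S (iter j Ti x)).
Variables (n : nat) (h : 'I_n -> nat) (L : nat -> seq 'I_n) (K : nat).
Hypothesis tiling_lengthL : forall m, (N <= m)%N -> tiling_length h (L m) = m.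
Hypothesis short_tiles_early :
  forall m o i, tile_at h (L m) o = Some (i, 0%N) -> (h i < 2)%N -> (o < K)%N.

Let base i := tile_level T Ti S h L i 0.
Let tall_bases := \big[setU/set0]_(i < n | (1 < h i)%N) base i.
Let short_bases := \big[setU/set0]_(i < n | ~~ (1 < h i)%N) base i.

Let measurable_base i : measurable (base i).
Proof. exact: measurable_tile_level. Qed.

Let trivIset_bases : trivIset setT base.
Proof. by move=> i j _ _ [x [Hi Hj]]; have [] := tile_level_uniq Hi Hj. Qed.

Lemma sum_measure_tile_towers :
  (\sum_(i < n) mu (tower_union T (base i) (h i)) = mu (aperiodic_below T N))%E.
Proof.
have mU i : measurable (tower_union T (base i) (h i)).
  rewrite (tower_union_tile TK TiK marker_gap tiling_lengthL).
  by apply: bigcup_measurable => k _; exact: measurable_tile_level.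
have tU : trivIset setT (fun i => tower_union T (base i) (h i)).
  move=> i j _ _ [x Hx]; apply: contrapT => ij; move: Hx.
  by rewrite (tile_towers_disjoint TK TiK marker_gap tiling_lengthL ij).
rewrite -(measure_bigsetU_ord mu xpredT mU tU).
rewrite -(bigcup_tile_towers TK TiK marker_gap markers_aperiodic markers_cover tiling_lengthL).
congr (mu _); apply/seteqP; split => x; first by move/mem_bigsetU_ord => [i _ Hx]; exists i.
by move=> [i _ Hx]; apply/mem_bigsetU_ord; exists i.
Qed.

(* Tall bases are moved by [T] into the second level of their tower. *)
Let tall_short_image_disjoint :
  (tall_bases `|` short_bases) `&` T @` tall_bases = set0.
Proof.
apply/seteqP; split => // y [Hy [x /mem_bigsetU_ord [i hi Hi] Txy]]; subst y.
have [j Hj] : exists j, base j (T x).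
  by case: Hy => /mem_bigsetU_ord [j _ Hj]; exists j.
by have [_] := tile_level_uniq (tile_levelT TK TiK marker_gap tiling_lengthL Hi hi) Hj.
Qed.

Let measure_short_bases_le : (mu short_bases <= K%:R%:E * mu S)%E.
Proof.
pose near_marker := \big[setU/set0]_(b < K) (iter b Ti @^-1` S).
have mIS b : measurable (iter b Ti @^-1` S) by exact: measurable_preimage_iter.
have QW : short_bases `<=` near_marker.
  move=> x /mem_bigsetU_ord [i]; rewrite -leqNgt => hi Hi.
  have [b hb Sb] := short_tile_base_near_marker short_tiles_early Hi hi.
  by apply/mem_bigsetU_ord; exists (Ordinal hb).
apply: (le_trans (le_measure mu _ _ QW)); rewrite ?inE //.
- by apply: bigsetU_measurable => i _.
- by apply: bigsetU_measurable => b _.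
apply: (le_trans (Boole_inequality mu (fun b _ => mIS b))).
rewrite (eq_bigr (fun=> mu S)) => [|b _]; last exact: measure_preimage_iterTi.
rewrite -(fineK (fin_num_measure mu _ mS)) sumEFin lee_fin sumr_const card_ord.
by rewrite mulr_natl.
Qed.

Lemma sum_measure_bases_le : (0 < N)%N ->
  (\sum_(i < n) mu (base i) <= (2^-1 + K%:R / N%:R)%:E)%E.
Proof.
move=> N_gt0.
have mP : measurable tall_bases by apply: bigsetU_measurable => i _.
have mQ : measurable short_bases by apply: bigsetU_measurable => i _.
have PQ : tall_bases `&` short_bases = set0.
  apply/seteqP; split => // x [/mem_bigsetU_ord [i hi Hi] /mem_bigsetU_ord [j hj Hj]].
  by have [ij _] := tile_level_uniq Hi Hj; move: hj; rewrite -ij hi.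
have mTP : measurable (T @` tall_bases).
  by rewrite -[T]/(iter 1 T) (image_iterT TK TiK); exact: measurable_preimage.
have le1 : (mu tall_bases + mu short_bases + mu tall_bases <= 1)%E.
  rewrite -{2}(measure_image_T mP) -(measureU mu mP mQ PQ).
  rewrite -(measureU mu (measurableU _ _ mP mQ) mTP tall_short_image_disjoint).
  by apply: probability_le1; do !apply: measurableU.
have sumE : (\sum_(i < n) mu (base i) = mu tall_bases + mu short_bases)%E.
  by rewrite (bigID (fun i => (1 < h i)%N)) /= !measure_bigsetU_ord.
have muQ := measure_short_bases_le; have muS := measure_markers_le.
move: le1 muQ; rewrite sumE.
rewrite -(fineK (fin_num_measure mu _ mP)) -(fineK (fin_num_measure mu _ mQ)).
rewrite -(fineK (fin_num_measure mu _ mS)) -!EFinD -EFinM !lee_fin.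
have s0 : 0 <= fine (mu S) by apply/fine_ge0/measure_ge0.
have N0 : 0 < N%:R :> R by rewrite ltr0n.
move: muS s0; set s := fine (mu S); set p := fine (mu tall_bases).
set q := fine (mu short_bases) => muS s0 le1 muQ.
have : K%:R * s <= K%:R / N%:R.
  have K0 : 0 <= K%:R :> R by rewrite ler0n.
  by rewrite ler_pdivlMr //; nra.
have : 0 <= K%:R / N%:R :> R by rewrite divr_ge0 ?ler0n.
lra.
Qed.

End InvariantMeasure.

Theorem lemma2 (R : realType) (d : measure_display) (X : measurableType d)
  (rho : X -> X -> R)
  (Hmetric : is_metric rho) (Hsep : rho_separable rho)
  (Hborel : @measurable d X = <<s rho_open rho >>)
  (T : X -> X) (HT : borel_automorphism T)
  (n : nat) (h : 'I_n -> nat)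
  (Hn : (0 < n)%N) (Hinj : injective h) (Hpos : forall i, (0 < h i)%N)
  (Hprim : \big[gcdn/0%N]_(i < n) h i = 1%N)
  (Hnontriv : exists i, h i <> 1%N)
  (eps : R) (Heps : 0 < eps) :
  exists B : 'I_n -> set X,
    [/\ forall i, measurable (B i),
        forall i, tower_full T (B i) (h i),
        forall i j, i <> j ->
          tower_union T (B i) (h i) `&` tower_union T (B j) (h j) = set0,
        T @` (\bigcup_(i in setT) tower_union T (B i) (h i))
          = \bigcup_(i in setT) tower_union T (B i) (h i) &
        forall mu : probability X R, M_ap T mu ->
          (\sum_(i < n) mu (tower_union T (B i) (h i)) = 1)%E /\
          (\sum_(i < n) mu (B i) < (2^-1 + eps)%:E)%E ].
Proof.
case: HT => Ti [TK TiK mT mTi].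
have [en en_dense] := separable_dense_seq Hsep.
have [i0 hi0] : exists i0, (1 < h i0)%N.
  by case: Hnontriv => i hi; exists i; have := Hpos i; lia.
have [K [L [tiling_lengthK short_tiles_early]]] := eventual_tilings Hpos Hprim hi0.
have [N KN KN_lt_eps] := exists_nat_ratio_lt K Heps.
have N_gt0 : (0 < N)%N by lia.
have tiling_lengthL m : (N <= m)%N -> tiling_length h (L m) = m.
  by move=> Nm; apply: tiling_lengthK; lia.
pose S := markers rho en T Ti N.
have mS : measurable S by exact: measurable_markers.
have gap : forall x j, S x -> (0 < j < N)%N -> ~ S (iter j T x) by exact: markers_gap.
have SG : S `<=` aperiodic_below T N by exact: markers_aperiodic.
have cover x : aperiodic_below T N x ->
    exists j, (j < N)%N /\ (S (iter j T x) \/ S (iter j Ti x)).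
  exact: markers_cover.
exists (fun i => tile_level T Ti S h L i 0); split.
- by move=> i; exact: measurable_tile_level.
- by move=> i; exact: (tower_full_tile TK TiK gap tiling_lengthL).
- by move=> i j; exact: (tile_towers_disjoint TK TiK gap tiling_lengthL).
- by rewrite (bigcup_tile_towers TK TiK gap SG cover tiling_lengthL) (image_aperiodic_below TK TiK).
move=> mu [mu_invariant mu_periodic]; split.
  rewrite (sum_measure_tile_towers TK TiK mT mTi mu mS gap SG cover tiling_lengthL).
  apply: probability_conull mu_periodic.
  - exact: (measurable_aperiodic_below Hmetric Hborel en_dense).
  - exact: (measurable_periodic_points Hmetric Hborel en_dense).
  - exact: complement_aperiodic_below.
apply: le_lt_trans (sum_measure_bases_le TK TiK mT mTi mu_invariant mS gap
  tiling_lengthL short_tiles_early N_gt0) _.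
by rewrite lte_fin ltrD2l.
Qed.
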